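(* Let $\mathcal{L}$ be a finite algebraic language, $\mathcal{V}$ an equational class of $\mathcal{L}$-algebras, and $\Sigma$ a finite $\mathcal{V}$-unifiable set of $\mathcal{L}$-identities. Then for any finite set of variables $X\supseteq\mathrm{Var}(\Sigma)$, \[\mathrm{type}\bigl(\mathsf{E}_{\mathcal{V}}(\Sigma,X)\bigr)=\mathrm{type}\bigl(\mathsf{C}_{\mathcal{V}}(\mathbf{Fp}_{\mathcal{V}}(\Sigma,X))\bigr).\] Hence the exact type and the algebraic exact type of $\mathcal{V}$ coincide.
   Context: $\mathbf{Fm}_{\mathcal{L}}(Y)$ is the formula algebra over variables $Y$ ($\omega$ = all variables); substitutions are homomorphisms of formula algebras; $\mathrm{Var}(\Gamma)$ is the set of variables in $\Gamma$. $\mathbf{F}_{\mathcal{V}}(Y)$ is the free algebra of $\mathcal{V}$ over $Y$, $h_{\mathcal{V}}\colon\mathbf{Fm}_{\mathcal{L}}(Y)\to\mathbf{F}_{\mathcal{V}}(Y)$ the canonical homomorphism. A substitution $\sigma\colon\mathbf{Fm}_{\mathcal{L}}(X)\to\mathbf{Fm}_{\mathcal{L}}(\omega)$ is a $\mathcal{V}$-unifier of $\Sigma$ (over $X$) if $\mathcal{V}\models\sigma(\varphi)\approx\sigma(\psi)$ for all $\varphi\approx\psi\in\Sigma$; $\Sigma$ is $\mathcal{V}$-unifiable if it has one. $\sigma_2\sqsubseteq_{\mathcal{V}}\sigma_1$ iff $\ker(h_{\mathcal{V}}\circ\sigma_1)\subseteq\ker(h_{\mathcal{V}}\circ\sigma_2)$;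 $\mathsf{E}_{\mathcal{V}}(\Sigma,X)$ is the set of $\mathcal{V}$-unifiers of $\Sigma$ over $X$ preordered by $\sqsubseteq_{\mathcal{V}}$. $\mathbf{Fp}_{\mathcal{V}}(\Sigma,X)=\mathbf{F}_{\mathcal{V}}(X)/\Theta_\Sigma$, $\Theta_\Sigma$ the congruence generated by $\{(h_{\mathcal{V}}(\varphi),h_{\mathcal{V}}(\psi))\mid\varphi\approx\psi\in\Sigma\}$; $\mathsf{FP}(\mathcal{V})$ is the class of finitely presented algebras of $\mathcal{V}$. An algebra is exact in $\mathcal{V}$ if it is isomorphic to a finitely generated subalgebra of $\mathbf{F}_{\mathcal{V}}(\omega)$. For $\mathbf{A}\in\mathsf{FP}(\mathcal{V})$, a coexact unifier of $\mathbf{A}$ is an onto homomorphism $u\colon\mathbf{A}\to\mathbf{E}$ with $\mathbf{E}$ exact in $\mathcal{V}$; for coexact unifiers $u_i\colon\mathbf{A}\to\mathbf{E}_i$, $u_2\le u_1$ iff there is a homomorphism $f\colon\mathbf{E}_1\to\mathbf{E}_2$ with $f\circ u_1=u_2$; $\mathsf{C}_{\mathcal{V}}(\mathbf{A})$ is the set of coexact unifiers of $\mathbf{A}$ preordered by $\le$. Types of a nonempty preordered set $(P,\le)$: a complete set is $M\subseteq P$ with each $x\in P$ below some $y\in M$; a $\mu$-set is a complete set of pairwise incomparable elements; type is $0$ if no $\mu$-set exists, $\infty$ if an infinite $\mu$-set exists, $\omega$ if a finite $\mu$-set of size $>1$ exists, $1$ if a $\mu$-set of size $1$ exists; ordered $1<\omega<\infty<0$.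 The exact type of $\mathcal{V}$ is the maximal $\mathrm{type}(\mathsf{E}_{\mathcal{V}}(\Sigma,\mathrm{Var}(\Sigma)))$ over $\mathcal{V}$-unifiable finite $\Sigma$; the algebraic exact type of $\mathcal{V}$ is the maximal $\mathrm{type}(\mathsf{C}_{\mathcal{V}}(\mathbf{A}))$ over $\mathbf{A}\in\mathsf{FP}(\mathcal{V})$ with $\mathsf{C}_{\mathcal{V}}(\mathbf{A})\neq\emptyset$. *)

From mathcomp Require Import all_boot.
From Stdlib Require Import ClassicalEpsilon.
Set Implicit Arguments. Unset Strict Implicit. Unset Printing Implicit Defensive.

Record language := Language { op : Type; arity : op -> nat }.

Definition finite_language (L : language) : Prop :=
  exists l : seq (op L), forall o, List.In o l.

Section Terms.
Variable L : language.

Inductive term (Y : Type) : Type :=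
| Var of Y
| App (o : op L) of ('I_(arity o) -> term Y).
Arguments Var {Y}.
Arguments App {Y} o _.

Record algebra := Algebra {
  carrier :> Type;
  interp : forall o : op L, ('I_(arity o) -> carrier) -> carrier }.
Arguments interp a o _ : clear implicits.

Fixpoint eval (A : algebra) (Y : Type) (e : Y -> A) (t : term Y) : A :=
  match t with
  | Var y => e y
  | App o a => interp A o (fun i => eval e (a i))
  end.

Fixpoint tsubst (Y Z : Type) (s : Y -> term Z) (t : term Y) : term Z :=
  match t with
  | Var y => s y
  | App o a => App o (fun i => tsubst s (a i))
  end.

Definition rename (Y Z : Type) (f : Y -> Z) : term Y -> term Z :=
  tsubst (fun y => Var (f y)).

Fixpoint occurs (Y : Type) (y : Y) (t : term Y) : Prop :=
  match t with
  | Var z => z = y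
  | App o a => exists i, occurs y (a i)
  end.

Definition term_alg (Y : Type) : algebra := Algebra (@App Y).

Definition is_hom (A B : algebra) (f : A -> B) : Prop :=
  forall o (a : 'I_(arity o) -> A), f (interp A o a) = interp B o (fun i => f (a i)).

Definition isomorphic (A B : algebra) : Prop :=
  exists f : A -> B, is_hom f /\ bijective f.

Definition congruence (A : algebra) (R : A -> A -> Prop) : Prop :=
  [/\ (forall x, R x x), (forall x y, R x y -> R y x),
      (forall x y z, R x y -> R y z -> R x z) &
      (forall o (a b : 'I_(arity o) -> A), (forall i, R (a i) (b i)) ->
           R (interp A o a) (interp A o b))].

Definition Cg (A : algebra) (R : A -> A -> Prop) (x y : A) : Prop :=
  forall th : A -> A -> Prop, congruence th -> (forall u v, R u v -> th u v) -> th x y.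

Definition qcarrier (A : algebra) (R : A -> A -> Prop) : Type :=
  {P : A -> Prop | exists a, P = R a}.

Definition qcls (A : algebra) (R : A -> A -> Prop) (a : A) : qcarrier R :=
  exist _ (R a) (ex_intro _ a erefl).

Definition qrep (A : algebra) (R : A -> A -> Prop) (c : qcarrier R) : A :=
  proj1_sig (constructive_indefinite_description _ (proj2_sig c)).

(* the quotient algebra A / R (meaningful when R is a congruence) *)
Definition quot (A : algebra) (R : A -> A -> Prop) : algebra :=
  @Algebra (qcarrier R)
    (fun o (c : 'I_(arity o) -> qcarrier R) =>
       qcls R (interp A o (fun i => qrep (c i)))).

(* an equational class is given by a set Id of identities over omega = nat *)
Definition in_class (Id : term nat -> term nat -> Prop) (A : algebra) : Prop :=
  forall p q, Id p q -> forall e : nat -> A, eval e p = eval e q.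

Definition Vequiv (Id : term nat -> term nat -> Prop) (Y : Type) (p q : term Y) : Prop :=
  forall A : algebra, in_class Id A -> forall e : Y -> A, eval e p = eval e q.

Definition free (Id : term nat -> term nat -> Prop) (Y : Type) : algebra :=
  @quot (term_alg Y) (@Vequiv Id Y).

Definition hV (Id : term nat -> term nat -> Prop) (Y : Type) (t : term Y) : free Id Y :=
  @qcls (term_alg Y) (@Vequiv Id Y) t.

Definition vset (X : seq nat) : Type := {x : nat | x \in X}.

Definition vval (X : seq nat) (x : vset X) : nat := proj1_sig x.

Definition sig_vars (S : seq (term nat * term nat)) (x : nat) : Prop :=
  exists pq, List.In pq S /\ (occurs x pq.1 \/ occurs x pq.2).

Definition unifiable (Id : term nat -> term nat -> Prop)
    (S : seq (term nat * term nat)) : Prop :=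
  exists s : nat -> term nat,
    forall pq, List.In pq S -> Vequiv Id (tsubst s pq.1) (tsubst s pq.2).

Definition is_unifier (Id : term nat -> term nat -> Prop)
    (S : seq (term nat * term nat)) (X : seq nat) (s : vset X -> term nat) : Prop :=
  forall p q : term (vset X),
    List.In (rename (@vval X) p, rename (@vval X) q) S ->
    Vequiv Id (tsubst s p) (tsubst s q).

Definition Unif (Id : term nat -> term nat -> Prop)
    (S : seq (term nat * term nat)) (X : seq nat) : Type :=
  {s : vset X -> term nat | @is_unifier Id S X s}.

Definition uleq (Id : term nat -> term nat -> Prop)
    (S : seq (term nat * term nat)) (X : seq nat) (s2 s1 : Unif Id S X) : Prop :=
  forall p q : term (vset X),
    hV Id (tsubst (proj1_sig s1) p) = hV Id (tsubst (proj1_sig s1) q) ->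
    hV Id (tsubst (proj1_sig s2) p) = hV Id (tsubst (proj1_sig s2) q).

Definition Sigma_pairs (Id : term nat -> term nat -> Prop)
    (S : seq (term nat * term nat)) (X : seq nat) (x y : free Id (vset X)) : Prop :=
  exists p q : term (vset X),
    [/\ List.In (rename (@vval X) p, rename (@vval X) q) S, x = hV Id p & y = hV Id q].

Definition Fp (Id : term nat -> term nat -> Prop)
    (S : seq (term nat * term nat)) (X : seq nat) : algebra :=
  @quot (free Id (vset X)) (Cg (@Sigma_pairs Id S X)).

Definition is_fp (Id : term nat -> term nat -> Prop) (A : algebra) : Prop :=
  exists (S : seq (term nat * term nat)) (X : seq nat),
    (forall x, sig_vars S x -> x \in X) /\ isomorphic (Fp Id S X) A.

Definition sg (A : algebra) (g : seq A) (x : A) : Prop :=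
  forall P : A -> Prop, (forall y, List.In y g -> P y) ->
    (forall o (a : 'I_(arity o) -> A), (forall i, P (a i)) -> P (interp A o a)) ->
    P x.

Lemma sg_closed (A : algebra) (g : seq A) o (a : 'I_(arity o) -> A) :
  (forall i, sg g (a i)) -> sg g (interp A o a).
Proof. move=> H P Hg Hc; apply: (Hc) => i; exact: (H i P Hg Hc). Qed.

Definition subalg (A : algebra) (g : seq A) : algebra :=
  @Algebra {x : A | sg g x}
    (fun o (a : 'I_(arity o) -> {x : A | sg g x}) =>
       exist _ (interp A o (fun i => proj1_sig (a i)))
             (sg_closed (fun i => proj2_sig (a i)))).

Definition exact (Id : term nat -> term nat -> Prop) (E : algebra) : Prop :=
  exists g : seq (free Id nat), isomorphic E (subalg g).

Definition Coexact (Id : term nat -> term nat -> Prop) (A : algebra) : Type :=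
  {E : algebra & {u : A -> E | [/\ is_hom u, (forall y, exists x, u x = y) & exact Id E]}}.

Definition cleq (Id : term nat -> term nat -> Prop) (A : algebra)
    (c2 c1 : Coexact Id A) : Prop :=
  exists f : projT1 c1 -> projT1 c2,
    is_hom f /\ forall a, f (proj1_sig (projT2 c1) a) = proj1_sig (projT2 c2) a.

End Terms.

Inductive utype := t_one | t_omega | t_infty | t_zero.

Definition utype_rank (t : utype) : nat :=
  match t with t_one => 0 | t_omega => 1 | t_infty => 2 | t_zero => 3 end.

Definition utype_le (t1 t2 : utype) : Prop := (utype_rank t1 <= utype_rank t2)%N.

Section Types.
Variables (P : Type) (le : P -> P -> Prop).

Definition complete_set (M : P -> Prop) : Prop :=
  forall x, exists y, M y /\ le x y.

Definition mu_set (M : P -> Prop) : Prop :=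
  complete_set M /\ forall x y, M x -> M y -> x <> y -> ~ le x y.

Definition finite_pset (M : P -> Prop) : Prop :=
  exists l : seq P, forall x, M x -> List.In x l.

Definition has_type (t : utype) : Prop :=
  match t with
  | t_zero => ~ exists M, mu_set M
  | t_infty => exists M, mu_set M /\ ~ finite_pset M
  | t_omega => exists M, [/\ mu_set M, finite_pset M & exists x y, [/\ M x, M y & x <> y]]
  | t_one => exists M, mu_set M /\ exists x, forall y, M y <-> y = x
  end.
End Types.

Definition exact_type (L : language) (Id : term L nat -> term L nat -> Prop)
    (t : utype) : Prop :=
  (exists (S : seq (term L nat * term L nat)) (X : seq nat),
     [/\ unifiable Id S, (forall x, x \in X <-> sig_vars S x) &
         has_type (@uleq L Id S X) t]) /\
  (forall (S : seq (term L nat * term L nat)) (X : seq nat) (t' : utype),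
     unifiable Id S -> (forall x, x \in X <-> sig_vars S x) ->
     has_type (@uleq L Id S X) t' -> utype_le t' t).

Definition alg_exact_type (L : language) (Id : term L nat -> term L nat -> Prop)
    (t : utype) : Prop :=
  (exists A : algebra L,
     [/\ is_fp Id A, inhabited (Coexact Id A) & has_type (@cleq L Id A) t]) /\
  (forall (A : algebra L) (t' : utype),
     is_fp Id A -> inhabited (Coexact Id A) -> has_type (@cleq L Id A) t' ->
     utype_le t' t).

From mathcomp Require Import all_boot.
From Stdlib Require Import FunctionalExtensionality PropExtensionality.
From Stdlib Require Import ProofIrrelevance ClassicalEpsilon.
Set Implicit Arguments. Unset Strict Implicit. Unset Printing Implicit Defensive.

(* Both preorders are kernel preorders on pairs of terms over X: a unifier sigma is
   compared through ker (h_V o sigma), a coexact unifier u of Fp_V(Sigma, X) through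
   the kernel of u composed with the projection Fm(X) -> Fp_V(Sigma, X).  A unifier
   sigma gives the coexact unifier onto the subalgebra of F_V(omega) generated by
   h_V (sigma X); a coexact unifier, followed by an embedding of its exact codomain
   into F_V(omega), gives back a unifier; both constructions preserve kernels, and
   kernel-preserving maps in both directions transport mu-sets, so the types agree.
   For the second statement, a finite presentation (Sigma, X) of an algebra can be
   padded with trivial identities so that X = Var(Sigma). *)

Lemma proj1_sig_inj (A : Type) (P : A -> Prop) (x y : sig P) :
  proj1_sig x = proj1_sig y -> x = y.
Proof. by case: x; case: y => b Hb a Ha /= E; apply: subset_eq_compat. Qed.

Lemma InP (T : eqType) (x : T) (s : seq T) : reflect (List.In x s) (x \in s).
Proof.
elim: s => [|y s IH]; first by constructor.
rewrite in_cons; apply: (iffP orP) => [[/eqP ->|/IH]|[->|/IH]];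
  by [left | right | rewrite eqxx | rewrite orbT].
Qed.

Lemma In_vset (X : seq nat) (x : vset X) : List.In x (pmap insub X).
Proof. by apply/InP; rewrite mem_pmap_sub; case: x. Qed.

Section Quotient.
Variables (L : language) (A : algebra L) (R : A -> A -> Prop).

Lemma qrep_def (c : qcarrier R) : proj1_sig c = R (qrep c).
Proof. by rewrite /qrep; case: constructive_indefinite_description. Qed.

Lemma qcls_qrep (c : qcarrier R) : qcls R (qrep c) = c.
Proof. by apply: proj1_sig_inj; rewrite /= qrep_def. Qed.

Lemma qcls_surj (c : qcarrier R) : exists a, c = qcls R a.
Proof. by exists (qrep c); rewrite qcls_qrep. Qed.

Hypotheses (R_refl : forall x, R x x) (R_sym : forall x y, R x y -> R y x)
  (R_trans : forall x y z, R x y -> R y z -> R x z).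

Lemma qcls_eq a b : qcls R a = qcls R b <-> R a b.
Proof.
split=> [/(f_equal (@proj1_sig _ _)) /= -> //|Rab].
apply: proj1_sig_inj; apply: functional_extensionality => x /=.
apply: propositional_extensionality.
by split; apply: R_trans; [apply: R_sym; exact: Rab | exact: Rab].
Qed.

Lemma qrep_qcls a : R (qrep (qcls R a)) a.
Proof. by apply: R_sym; move: (R_refl (qrep (qcls R a))); rewrite -qrep_def. Qed.
End Quotient.

Section Congruences.
Variables (L : language) (A : algebra L).

Lemma Cg_congruence (R : A -> A -> Prop) : congruence (Cg R).
Proof.
split.
- by move=> x th [].
- by move=> x y Rxy th Hth HR; case: (Hth) => _ Hs _ _; exact: Hs (Rxy _ Hth HR).
- move=> x y z Rxy Ryz th Hth HR; case: (Hth) => _ _ Ht _.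
  exact: Ht (Rxy _ Hth HR) (Ryz _ Hth HR).
- by move=> o a b Rab th Hth HR; case: (Hth) => _ _ _ Hm; apply: Hm => i; apply: Rab.
Qed.

Lemma Cg_incl (R : A -> A -> Prop) x y : R x y -> Cg R x y.
Proof. by move=> Rxy th _; apply. Qed.

Lemma hom_ker_congruence (B : algebra L) (f : A -> B) :
  is_hom f -> congruence (fun x y => f x = f y).
Proof.
move=> hom_f; split=> [//|x y -> //|x y z -> -> //|o a b Eab].
by rewrite !hom_f; f_equal; apply: functional_extensionality.
Qed.

Lemma hom_factor (E1 E2 : algebra L) (u1 : A -> E1) (u2 : A -> E2) :
  is_hom u1 -> is_hom u2 -> (forall e, exists a, u1 a = e) ->
  (forall a b, u1 a = u1 b -> u2 a = u2 b) ->
  exists f : E1 -> E2, is_hom f /\ forall a, f (u1 a) = u2 a.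
Proof.
move=> hom1 hom2 /choice [pre preK] ker12.
have fK a : u2 (pre (u1 a)) = u2 a by apply: ker12; rewrite preK.
exists (fun e => u2 (pre e)); split=> // o es.
have -> : es = (fun i => u1 (pre (es i))).
  by apply: functional_extensionality => i; rewrite preK.
by rewrite -hom1 fK hom2; f_equal; apply: functional_extensionality => i; rewrite fK.
Qed.
End Congruences.

Section FreeAlgebra.
Variables (L : language) (Id : term L nat -> term L nat -> Prop).

Lemma eval_tsubst (A : algebra L) Y Z (e : Z -> A) (s : Y -> term L Z) t :
  eval e (tsubst s t) = eval (fun y => eval e (s y)) t.
Proof.
by elim: t => [y|o a IH] //=; f_equal; apply: functional_extensionality.
Qed.

Lemma tsubst_rename Y Z W (f : Y -> Z) (s : Z -> term L W) t :
  tsubst s (rename f t) = tsubst (fun y => s (f y)) t.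
Proof.
by elim: t => [y|o a IH] //=; f_equal; apply: functional_extensionality.
Qed.

Lemma Vequiv_subst Y Z (s : Y -> term L Z) (p q : term L Y) :
  Vequiv Id p q -> Vequiv Id (tsubst s p) (tsubst s q).
Proof. by move=> Epq B HB e; rewrite !eval_tsubst; apply: Epq. Qed.

Section Over.
Variable Y : Type.

Lemma Vequiv_sym (p q : term L Y) : Vequiv Id p q -> Vequiv Id q p.
Proof. by move=> Epq B HB e; rewrite Epq. Qed.

Lemma Vequiv_trans (p q r : term L Y) :
  Vequiv Id p q -> Vequiv Id q r -> Vequiv Id p r.
Proof. by move=> Epq Eqr B HB e; rewrite Epq ?Eqr. Qed.

Lemma Vequiv_App o (a b : 'I_(arity o) -> term L Y) :
  (forall i, Vequiv Id (a i) (b i)) -> Vequiv Id (App a) (App b).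
Proof.
by move=> Eab B HB e /=; f_equal; apply: functional_extensionality => i; apply: Eab.
Qed.

Lemma hV_eq (p q : term L Y) : hV Id p = hV Id q <-> Vequiv Id p q.
Proof. by apply: qcls_eq; [|exact: Vequiv_sym|exact: Vequiv_trans]. Qed.

Lemma hV_qrep (t : term L Y) : Vequiv Id (qrep (hV Id t)) t.
Proof. by apply: qrep_qcls; [|exact: Vequiv_sym]. Qed.

Lemma hV_hom : @is_hom L (term_alg L Y) (free Id Y) (@hV L Id Y).
Proof.
move=> o ts; apply/hV_eq; apply: Vequiv_App => i.
exact/Vequiv_sym/hV_qrep.
Qed.

Lemma hV_surj (c : free Id Y) : exists t, c = hV Id t.
Proof. exact: (@qcls_surj _ (term_alg L Y) (@Vequiv L Id Y) c). Qed.
End Over.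

Definition free_subst Y Z (s : Y -> term L Z) (c : free Id Y) : free Id Z :=
  hV Id (tsubst s (qrep c)).

Lemma free_subst_hV Y Z (s : Y -> term L Z) t :
  free_subst s (hV Id t) = hV Id (tsubst s t).
Proof. by apply/hV_eq; apply/Vequiv_subst/hV_qrep. Qed.

Lemma free_subst_hom Y Z (s : Y -> term L Z) : is_hom (free_subst s).
Proof.
move=> o cs.
change (free_subst s (hV Id (App (fun i => qrep (cs i)))) =
        @interp _ (free Id Z) o (fun i => hV Id (tsubst s (qrep (cs i))))).
by rewrite free_subst_hV -hV_hom.
Qed.
End FreeAlgebra.

Lemma finite_pset_preimage (P Q : Type) (F : P -> Q) (M : P -> Prop) :
  (forall x y, M x -> M y -> F x = F y -> x = y) ->
  finite_pset (fun q => exists2 x, M x & q = F x) -> finite_pset M.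
Proof.
move=> F_inj [l Hl]; case: (classic (inhabited P)) => [[x0]|noP]; last first.
  by exists nil => x; case: noP.
have /choice [g Hg] :
    forall q, exists y, (exists2 x, M x & q = F x) -> M y /\ F y = q.
  move=> q; case: (classic (exists2 x, M x & q = F x)) => [[x Mx ->]|no_x].
    by exists x => _.
  by exists x0 => /no_x.
exists (List.map g l) => x Mx.
have [Mgx Egx] : M (g (F x)) /\ F (g (F x)) = F x by apply: Hg; exists x.
rewrite -(F_inj _ _ Mgx Mx Egx); apply: List.in_map; apply: Hl; by exists x.
Qed.

Section TypeTransfer.
Variables (P Q : Type) (leP : P -> P -> Prop) (leQ : Q -> Q -> Prop) (F : P -> Q).
Hypotheses (leQ_trans : forall a b c, leQ a b -> leQ b c -> leQ a c)
  (F_embed : forall x y, leP x y <-> leQ (F x) (F y))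
  (F_cofinal : forall q, exists x, leQ q (F x)).

Definition img (M : P -> Prop) (q : Q) : Prop := exists2 x, M x & q = F x.

Lemma mu_set_img M : mu_set leP M -> mu_set leQ (img M).
Proof.
case=> Mcomplete Mincomp; split.
- move=> q; have [x qx] := F_cofinal q; have [y [My xy]] := Mcomplete x.
  by exists (F y); split; [exists y | apply: leQ_trans qx _; apply/F_embed].
- move=> _ _ [x Mx ->] [y My ->] Fxy /F_embed.
  by apply: Mincomp => // Exy; apply: Fxy; rewrite Exy.
Qed.

Lemma mu_set_inj M (leQ_refl : forall q, leQ q q) :
  mu_set leP M -> forall x y, M x -> M y -> F x = F y -> x = y.
Proof.
case=> _ Mincomp x y Mx My Fxy; apply: NNPP => x_ne_y.
by apply: (Mincomp x y Mx My x_ne_y); apply/F_embed; rewrite Fxy.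
Qed.

Lemma has_type_img (leQ_refl : forall q, leQ q q) t :
  t <> t_zero -> has_type leP t -> has_type leQ t.
Proof.
case: t => // _ /=.
- case=> M [muM [x Mx]]; exists (img M); split; first exact: mu_set_img.
  exists (F x) => q; split; first by case=> y /Mx -> ->.
  by move=> ->; exists x; first exact/Mx.
- case=> M [muM [l Ml] [x [y [Mx My x_ne_y]]]]; exists (img M); split.
  + exact: mu_set_img.
  + by exists (List.map F l) => _ [z Mz ->]; apply/List.in_map/Ml.
  + exists (F x), (F y); split; [by exists x | by exists y|].
    by move/(mu_set_inj leQ_refl muM Mx My).
- case=> M [muM M_infinite]; exists (img M); split; first exact: mu_set_img.
  by move/(finite_pset_preimage (mu_set_inj leQ_refl muM)).
Qed.
End TypeTransfer.

Definition kernel_le (P T : Type) (k : P -> T -> T -> Prop) (x y : P) : Prop :=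
  forall a b, k y a b -> k x a b.

Lemma kernel_le_trans (P T : Type) (k : P -> T -> T -> Prop) x y z :
  kernel_le k x y -> kernel_le k y z -> kernel_le k x z.
Proof. by move=> xy yz a b /yz /xy. Qed.

Section KernelPreorders.
Variables (T P Q : Type) (kP : P -> T -> T -> Prop) (kQ : Q -> T -> T -> Prop).
Variables (F : P -> Q) (G : Q -> P).
Hypotheses (kF : forall x a b, kQ (F x) a b <-> kP x a b)
  (kG : forall q a b, kP (G q) a b <-> kQ q a b).

Lemma kernel_le_embed x y : kernel_le kP x y <-> kernel_le kQ (F x) (F y).
Proof. by split=> xy a b /kF /xy /kF. Qed.

Lemma kernel_le_cofinal q : exists x, kernel_le kQ q (F x).
Proof. by exists (G q) => a b /kF /kG. Qed.
End KernelPreorders.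

Lemma has_type_kernel_le (T P Q : Type) (kP : P -> T -> T -> Prop)
    (kQ : Q -> T -> T -> Prop) (F : P -> Q) (G : Q -> P) :
  (forall x a b, kQ (F x) a b <-> kP x a b) ->
  (forall q a b, kP (G q) a b <-> kQ q a b) ->
  forall t, has_type (kernel_le kP) t <-> has_type (kernel_le kQ) t.
Proof.
move=> kF kG.
have embF := kernel_le_embed kF; have embG := kernel_le_embed kG.
have cofF := kernel_le_cofinal kF kG; have cofG := kernel_le_cofinal kG kF.
have transP := @kernel_le_trans P T kP; have transQ := @kernel_le_trans Q T kQ.
case=> [| | |]; try by split; [apply: (has_type_img transQ embF cofF)
                              | apply: (has_type_img transP embG cofG)] => // q.
split=> no_mu [M muM]; apply: no_mu.
- by exists (img G M); apply: mu_set_img.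
- by exists (img F M); apply: mu_set_img.
Qed.

Section Presentation.
Variables (L : language) (Id : term L nat -> term L nat -> Prop)
  (S : seq (term L nat * term L nat)) (X : seq nat).

(* Weaker than ker rho = Theta_Sigma, but it is all the argument uses. *)
Definition presents (A : algebra L) (rho : term L (vset X) -> A) : Prop :=
  [/\ @is_hom L (term_alg L (vset X)) A rho,
      forall a, exists p, rho p = a,
      forall p q, List.In (rename (@vval X) p, rename (@vval X) q) S -> rho p = rho q &
      forall s, is_unifier Id S s ->
        forall p q, rho p = rho q -> hV Id (tsubst s p) = hV Id (tsubst s q)].

Definition unifier_ker (s : Unif Id S X) (p q : term L (vset X)) : Prop :=
  hV Id (tsubst (proj1_sig s) p) = hV Id (tsubst (proj1_sig s) q).

Definition coexact_map (A : algebra L) (c : Coexact Id A) : A -> projT1 c :=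
  proj1_sig (projT2 c).

Lemma coexact_embedding (A : algebra L) (c : Coexact Id A) :
  exists w : A -> free Id nat, is_hom w /\
    forall a b, w a = w b <-> coexact_map c a = coexact_map c b.
Proof.
case: c => E [u [hom_u onto_u [g [f [hom_f bij_f]]]]]; rewrite /coexact_map /=.
exists (fun a => proj1_sig (f (u a))); split; first by move=> o a; rewrite hom_u hom_f.
by move=> a b; split=> [/proj1_sig_inj/(bij_inj bij_f)|->].
Qed.

Lemma subalg_exact (g : seq (free Id nat)) : exact Id (subalg g).
Proof. by exists g, id; split => //; exists id. Qed.

Definition subst_gens (s : vset X -> term L nat) : seq (free Id nat) :=
  List.map (fun x => hV Id (s x)) (pmap insub X).

Lemma sg_subst_gens s v : sg (subst_gens s) v <-> exists p, v = hV Id (tsubst s p).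
Proof.
split.
  move=> sg_v; apply: (sg_v (fun v => exists p, v = hV Id (tsubst s p))).
    by move=> _ /List.in_map_iff [x [<- _]]; exists (Var L x).
  move=> o a /choice [ps Hps]; exists (App ps).
  have -> : a = (fun i => hV Id (tsubst s (ps i))) by apply: functional_extensionality.
  by rewrite -hV_hom.
case=> p ->; elim: p => [x|o ts IH] /=.
  by move=> P HP _; apply/HP/List.in_map/In_vset.
rewrite hV_hom; exact: sg_closed.
Qed.

Section Presented.
Variables (A : algebra L) (rho : term L (vset X) -> A).
Hypotheses (rho_hom : @is_hom L (term_alg L (vset X)) A rho)
  (rho_surj : forall a, exists p, rho p = a)
  (rho_S : forall p q, List.In (rename (@vval X) p, rename (@vval X) q) S -> rho p = rho q)
  (rho_ker : forall s, is_unifier Id S s ->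
     forall p q, rho p = rho q -> hV Id (tsubst s p) = hV Id (tsubst s q)).

Definition coexact_ker (c : Coexact Id A) (p q : term L (vset X)) : Prop :=
  coexact_map c (rho p) = coexact_map c (rho q).

Lemma cleq_kernel_le c2 c1 : cleq c2 c1 <-> kernel_le coexact_ker c2 c1.
Proof.
case: c1 => E1 [u1 [hom1 onto1 ex1]]; case: c2 => E2 [u2 [hom2 onto2 ex2]].
rewrite /cleq /kernel_le /coexact_ker /coexact_map /=; split.
  by case=> f [_ fu] p q E; rewrite -!fu E.
move=> ker12; apply: hom_factor => // a b.
by have [p <-] := rho_surj a; have [q <-] := rho_surj b; apply: ker12.
Qed.

Definition rho_pre (a : A) : term L (vset X) :=
  proj1_sig (constructive_indefinite_description _ (rho_surj a)).

Lemma rho_preK a : rho (rho_pre a) = a.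
Proof. by rewrite /rho_pre; case: constructive_indefinite_description. Qed.

Section UnifierToCoexact.
Variable s : Unif Id S X.

Definition coexact_of_unifier_map (a : A) : subalg (subst_gens (proj1_sig s)) :=
  exist _ (hV Id (tsubst (proj1_sig s) (rho_pre a)))
    (proj2 (sg_subst_gens _ _) (ex_intro _ (rho_pre a) erefl)).

Lemma coexact_of_unifier_map_rho p :
  proj1_sig (coexact_of_unifier_map (rho p)) = hV Id (tsubst (proj1_sig s) p).
Proof. by apply: rho_ker; [exact: proj2_sig s | rewrite rho_preK]. Qed.

Lemma coexact_of_unifier_hom : is_hom coexact_of_unifier_map.
Proof.
move=> o a; apply: proj1_sig_inj.
have -> : a = (fun i => rho (rho_pre (a i))).
  by apply: functional_extensionality => i; rewrite rho_preK.
rewrite -rho_hom coexact_of_unifier_map_rho.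
transitivity (@interp _ (free Id nat) o
                (fun i => hV Id (tsubst (proj1_sig s) (rho_pre (a i))))).
  exact: hV_hom.
congr (@interp _ _ o); apply: functional_extensionality => i.
by rewrite coexact_of_unifier_map_rho.
Qed.

Lemma coexact_of_unifier_onto : forall y, exists a, coexact_of_unifier_map a = y.
Proof.
move=> [v sg_v]; have [p Ep] := proj1 (sg_subst_gens _ _) sg_v.
by exists (rho p); apply: proj1_sig_inj; rewrite coexact_of_unifier_map_rho -Ep.
Qed.

Definition coexact_of_unifier : Coexact Id A :=
  existT _ _ (exist _ coexact_of_unifier_map
    (And3 coexact_of_unifier_hom coexact_of_unifier_onto (subalg_exact _))).

Lemma coexact_ker_of_unifier p q :
  coexact_ker coexact_of_unifier p q <-> unifier_ker s p q.
Proof.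
rewrite /coexact_ker /coexact_map /unifier_ker /=; split=> [E|E].
  by rewrite -!coexact_of_unifier_map_rho E.
by apply: proj1_sig_inj; rewrite !coexact_of_unifier_map_rho.
Qed.
End UnifierToCoexact.

Section CoexactToUnifier.
Variable c : Coexact Id A.

Definition coexact_embed : A -> free Id nat :=
  proj1_sig (constructive_indefinite_description _ (coexact_embedding c)).

Lemma coexact_embedP : is_hom coexact_embed /\
  forall a b, coexact_embed a = coexact_embed b <-> coexact_map c a = coexact_map c b.
Proof. by rewrite /coexact_embed; case: constructive_indefinite_description. Qed.

Definition unifier_of_coexact_subst (x : vset X) : term L nat :=
  qrep (coexact_embed (rho (Var L x))).

Lemma hV_unifier_of_coexact_subst p :
  hV Id (tsubst unifier_of_coexact_subst p) = coexact_embed (rho p).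
Proof.
elim: p => [x|o ts IH] /=; first exact: qcls_qrep.
rewrite hV_hom rho_hom (proj1 coexact_embedP).
by f_equal; apply: functional_extensionality.
Qed.

Lemma unifier_of_coexact_subst_unifier : is_unifier Id S unifier_of_coexact_subst.
Proof. by move=> p q /rho_S Epq; apply/hV_eq; rewrite !hV_unifier_of_coexact_subst Epq. Qed.

Definition unifier_of_coexact : Unif Id S X :=
  exist _ _ unifier_of_coexact_subst_unifier.

Lemma unifier_ker_of_coexact p q :
  unifier_ker unifier_of_coexact p q <-> coexact_ker c p q.
Proof. by rewrite /unifier_ker /= !hV_unifier_of_coexact_subst; exact: coexact_embedP.2. Qed.
End CoexactToUnifier.

Lemma presented_types t : has_type (@uleq L Id S X) t <-> has_type (@cleq L Id A) t.
Proof.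
have -> : @cleq L Id A = kernel_le coexact_ker.
  apply: functional_extensionality => c2; apply: functional_extensionality => c1.
  exact/propositional_extensionality/cleq_kernel_le.
exact: has_type_kernel_le coexact_ker_of_unifier unifier_ker_of_coexact t.
Qed.

Lemma presented_inhabited : inhabited (Unif Id S X) <-> inhabited (Coexact Id A).
Proof.
by split=> -[x]; constructor; [exact: coexact_of_unifier x | exact: unifier_of_coexact x].
Qed.
End Presented.

Lemma presents_types_inhabited (A : algebra L) (rho : term L (vset X) -> A) :
  presents rho ->
  (forall t, has_type (@uleq L Id S X) t <-> has_type (@cleq L Id A) t) /\
  (inhabited (Unif Id S X) <-> inhabited (Coexact Id A)).
Proof. by case=> *; split; [exact: presented_types | exact: presented_inhabited]. Qed.

Lemma presents_iso (A B : algebra L) (rho : term L (vset X) -> A) (h : A -> B) :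
  presents rho -> is_hom h -> bijective h -> presents (fun p => h (rho p)).
Proof.
case=> rho_hom rho_surj rho_S rho_ker hom_h bij_h; split.
- by move=> o ts; rewrite rho_hom hom_h.
- case: bij_h => h' _ h'K b; have [p rho_p] := rho_surj (h' b).
  by exists p; rewrite rho_p h'K.
- by move=> p q /rho_S ->.
- by move=> s s_unif p q /(bij_inj bij_h); apply: rho_ker.
Qed.

Definition Fp_proj (p : term L (vset X)) : Fp Id S X :=
  @qcls _ (free Id (vset X)) (Cg (@Sigma_pairs L Id S X)) (hV Id p).

Lemma Fp_presents : presents Fp_proj.
Proof.
have [Cr Cs Ct Cm] := Cg_congruence (@Sigma_pairs L Id S X).
have Fp_proj_eq p q : Fp_proj p = Fp_proj q <-> Cg (@Sigma_pairs L Id S X) (hV Id p) (hV Id q).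
  exact: qcls_eq.
split.
- move=> o ts; apply/(qcls_eq Cr Cs Ct); rewrite hV_hom; apply: Cm => i.
  by apply: (Cs); apply: (qrep_qcls Cr Cs).
- move=> c; have [a ->] := qcls_surj c; have [p ->] := hV_surj a; by exists p.
- by move=> p q S_pq; apply/Fp_proj_eq; apply: Cg_incl; exists p, q.
- move=> s s_unif p q /Fp_proj_eq Cg_pq; rewrite -!free_subst_hV.
  apply: (Cg_pq (fun x y => free_subst s x = free_subst s y)).
    exact/hom_ker_congruence/free_subst_hom.
  move=> _ _ [p' [q' [S_pq -> ->]]]; rewrite !free_subst_hV.
  exact/hV_eq/s_unif.
Qed.

Lemma Fp_types_inhabited :
  (forall t, has_type (@uleq L Id S X) t <-> has_type (@cleq L Id (Fp Id S X)) t) /\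
  (inhabited (Unif Id S X) <-> inhabited (Coexact Id (Fp Id S X))).
Proof. exact/presents_types_inhabited/Fp_presents. Qed.
End Presentation.

Section ExactVariables.
Variables (L : language) (Id : term L nat -> term L nat -> Prop).

Lemma rename_vval_onto (X : seq nat) (t : term L nat) :
  (forall x, occurs x t -> x \in X) -> exists p : term L (vset X), rename (@vval X) p = t.
Proof.
elim: t => [n|o ts IH] t_X; first by exists (Var L (exist _ n (t_X n erefl))).
have /choice [ps Hps] : forall i, exists p : term L (vset X), rename (@vval X) p = ts i.
  by move=> i; apply: IH => x x_ti; apply: t_X; exists i.
exists (App ps); rewrite /rename /=; congr App.
exact: functional_extensionality.
Qed.

Definition extend_subst (X : seq nat) (s : vset X -> term L nat) (n : nat) : term L nat :=
  if insub n is Some x then s x else Var L n.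

Lemma extend_subst_vval X (s : vset X -> term L nat) x : extend_subst s (vval x) = s x.
Proof. by case: x => n n_X; rewrite /extend_subst /= (insubT (fun n => n \in X) n_X). Qed.

Lemma unifiable_unifier (S : seq (term L nat * term L nat)) X :
  unifiable Id S -> inhabited (Unif Id S X).
Proof.
case=> s s_unif; constructor; exists (fun x => s (vval x)).
by move=> p q /s_unif; rewrite !tsubst_rename.
Qed.

Lemma unifier_unifiable (S : seq (term L nat * term L nat)) X :
  (forall x, sig_vars S x -> x \in X) -> inhabited (Unif Id S X) -> unifiable Id S.
Proof.
move=> S_X [[s s_unif]]; exists (extend_subst s) => -[a b] S_ab /=.
have [x ? | p Ep] := @rename_vval_onto X a.
  by apply: S_X; exists (a, b); split; [|left].
have [x ? | q Eq] := @rename_vval_onto X b.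
  by apply: S_X; exists (a, b); split; [|right].
rewrite -Ep -Eq !tsubst_rename.
have -> : (fun y => extend_subst s (vval y)) = s.
  by apply: functional_extensionality => y; apply: extend_subst_vval.
by apply: s_unif; rewrite Ep Eq.
Qed.

(* Padding with the trivial identities x ~ x makes Var(Sigma) = X without changing
   the unifiers, as the exact type requires. *)
Definition pad_vars (S : seq (term L nat * term L nat)) (X : seq nat) :=
  List.app S (List.map (fun x => (Var L x, Var L x)) X).

Lemma sig_vars_pad S X : (forall x, sig_vars S x -> x \in X) ->
  forall x, x \in X <-> sig_vars (pad_vars S X) x.
Proof.
move=> S_X x; split=> [/InP x_X|[pq [pad_pq occ_x]]].
  exists (Var L x, Var L x); split; last by left.
  by apply/List.in_or_app; right; apply/List.in_map_iff; exists x.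
case: (List.in_app_or _ _ _ pad_pq) => [S_pq|/List.in_map_iff [y [Epq /InP]]].
  by apply: S_X; exists pq.
by move: occ_x; rewrite -Epq => -[] ->.
Qed.

Lemma unifiable_pad S X : unifiable Id S -> unifiable Id (pad_vars S X).
Proof.
case=> s s_unif; exists s => pq pad_pq.
by case: (List.in_app_or _ _ _ pad_pq) => [/s_unif //|/List.in_map_iff [x [<- _]]].
Qed.

Lemma is_unifier_pad S X (s : vset X -> term L nat) :
  is_unifier Id (pad_vars S X) s <-> is_unifier Id S s.
Proof.
split=> s_unif p q S_pq; first by apply/s_unif/List.in_or_app; left.
case: (List.in_app_or _ _ _ S_pq) => {S_pq} [/s_unif //|/List.in_map_iff [x [[Ep Eq] _]]].
case: p Ep => [y|? ?] //= [Ey]; case: q Eq => [z|? ?] //= [Ez].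
by have -> : y = z by apply: proj1_sig_inj; move: Ey Ez; rewrite /vval => <- <-.
Qed.

Lemma has_type_uleq_ext (S S' : seq (term L nat * term L nat)) X :
  (forall s : vset X -> term L nat, is_unifier Id S s <-> is_unifier Id S' s) ->
  forall t, has_type (@uleq L Id S X) t <-> has_type (@uleq L Id S' X) t.
Proof.
move=> SS'.
pose F (s : Unif Id S X) : Unif Id S' X := exist _ _ (proj1 (SS' _) (proj2_sig s)).
pose G (s : Unif Id S' X) : Unif Id S X := exist _ _ (proj2 (SS' _) (proj2_sig s)).
exact: (@has_type_kernel_le _ _ _ (@unifier_ker L Id S X) (@unifier_ker L Id S' X) F G
          (fun _ _ _ => iff_refl _) (fun _ _ _ => iff_refl _)).
Qed.

Lemma fp_exact_presentation (A : algebra L) : is_fp Id A -> inhabited (Coexact Id A) ->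
  exists S X, [/\ unifiable Id S, (forall x, x \in X <-> sig_vars S x) &
    forall t, has_type (@uleq L Id S X) t <-> has_type (@cleq L Id A) t].
Proof.
case=> S [X [S_X [h [hom_h bij_h]]]] coexact_A.
have [types_A inh_A] :=
  presents_types_inhabited (presents_iso (Fp_presents Id S X) hom_h bij_h).
exists (pad_vars S X), X; split.
- exact/unifiable_pad/(unifier_unifiable S_X)/inh_A.
- exact: sig_vars_pad.
- by move=> t; rewrite -types_A; apply: has_type_uleq_ext => s; apply: is_unifier_pad.
Qed.

Lemma Fp_is_fp (S : seq (term L nat * term L nat)) X :
  (forall x, x \in X <-> sig_vars S x) -> is_fp Id (Fp Id S X).
Proof.
by move=> S_X; exists S, X; split; [move=> x /S_X | exists id; split=> //; exists id].
Qed.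

Lemma Fp_witness (S : seq (term L nat * term L nat)) X t :
  unifiable Id S -> (forall x, x \in X <-> sig_vars S x) ->
  has_type (@uleq L Id S X) t ->
  [/\ is_fp Id (Fp Id S X), inhabited (Coexact Id (Fp Id S X)) &
      has_type (@cleq L Id (Fp Id S X)) t].
Proof.
move=> unif_S S_X; have [types inh] := Fp_types_inhabited Id S X.
by split; [exact: Fp_is_fp | exact/inh/unifiable_unifier | exact/types].
Qed.
End ExactVariables.

Theorem theorem3p6 (L : language) (HL : finite_language L)
    (Id : term L nat -> term L nat -> Prop) :
  (forall (S : seq (term L nat * term L nat)) (X : seq nat),
     unifiable Id S ->
     (forall x, sig_vars S x -> x \in X) ->
     forall t : utype,
       has_type (@uleq L Id S X) t <-> has_type (@cleq L Id (Fp Id S X)) t) /\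
  (forall t : utype, exact_type Id t <-> alg_exact_type Id t).
Proof.
split=> [S X _ _|t]; first exact: (Fp_types_inhabited Id S X).1.
split=> [[[S [X [unif_S S_X type_t]]] max] | [[A [fp_A coexact_A type_t]] max]]; split.
- by exists (Fp Id S X); apply: Fp_witness.
- move=> A t' fp_A coexact_A type_t'.
  have [S' [X' [unif_S' S'_X types]]] := fp_exact_presentation fp_A coexact_A.
  exact/(max S' X' t' unif_S' S'_X)/types.
- have [S [X [unif_S S_X types]]] := fp_exact_presentation fp_A coexact_A.
  by exists S, X; split; last exact/types.
- move=> S X t' unif_S S_X /(Fp_witness unif_S S_X) [fp_Fp coexact_Fp type_t'].
  exact: max fp_Fp coexact_Fp type_t'.
Qed.
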